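(* Let $M$ be a free $\mathbb{T}$-module with a finite $\mathbb{T}$-basis, $V$ its associated complex vector space, and $(\cdot,\cdot)$ a bicomplex scalar product on $M$ which is hyperbolic positive and closed on $V$. Then $V$ is a closed subset of the metric space $(M,d)$, where $d(\widehat X,\widehat Y)=\|\widehat X-\widehat Y\|$.
   Context: Bicomplex numbers: $\mathbb{T}=\{z_1+z_2\mathbf{i_2}: z_1,z_2\in\mathbb{C}(\mathbf{i_1})\}$, $\mathbb{C}(\mathbf{i_1})=\{x+y\mathbf{i_1}: x,y\in\mathbb{R}\}$, $\mathbf{i_1}^2=\mathbf{i_2}^2=-1$, $\mathbf{i_1}\mathbf{i_2}=\mathbf{i_2}\mathbf{i_1}=\mathbf{j}$, $\mathbf{j}^2=1$ (commutative). Hyperbolic numbers $\mathbb{D}=\{x+y\mathbf{j}:x,y\in\mathbb{R}\}$. Idempotents $\mathbf{e_1}=(1+\mathbf{j})/2$, $\mathbf{e_2}=(1-\mathbf{j})/2$. Conjugation: $(z_1+z_2\mathbf{i_2})^{\dagger_3}=\overline{z_1}-\overline{z_2}\mathbf{i_2}$. $\mathbb{D}^+=\{a\mathbf{e_1}+b\mathbf{e_2}: a,b\ge 0\}$. $M$ has $\mathbb{T}$-basis $\{\widehat m_1,\dots,\widehat m_n\}$, $V=\{\sum x_l\widehat m_l: x_l\in\mathbb{C}(\mathbf{i_1})\}$; for $\widehat X=\sum x_l\widehat m_l$ with $x_l=x_{1l}\mathbf{e_1}+x_{2l}\mathbf{e_2}$, $x_{kl}\in\mathbb{C}(\mathbf{i_1})$,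 put $\widehat X_{\mathbf{e_k}}=\sum_l x_{kl}\widehat m_l\in V$. A bicomplex scalar product is a map $(\cdot,\cdot):M\times M\to\mathbb{T}$ with: $(\widehat X,\widehat Y_1+\widehat Y_2)=(\widehat X,\widehat Y_1)+(\widehat X,\widehat Y_2)$; $(\widehat X,\alpha\widehat Y)=\alpha(\widehat X,\widehat Y)$ for $\alpha\in\mathbb{T}$; $(\widehat X,\widehat Y)=(\widehat Y,\widehat X)^{\dagger_3}$; $(\widehat X,\widehat X)=0\iff\widehat X=0$. Hyperbolic positive: $(\widehat X,\widehat X)\in\mathbb{D}^+$ for all $\widehat X$. Closed on $V$: $(\widehat X,\widehat Y)\in\mathbb{C}(\mathbf{i_1})$ for $\widehat X,\widehat Y\in V$. For $\widehat Z\in V$, $\|\widehat Z\|=(\widehat Z,\widehat Z)^{1/2}$; for $\widehat X\in M$, $\|\widehat X\|:=\big((\|\widehat X_{\mathbf{e_1}}\|^2+\|\widehat X_{\mathbf{e_2}}\|^2)/2\big)^{1/2}$; $d$ is a metric on $M$. *)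

From HB Require Import structures.
From mathcomp Require Import all_boot all_order all_algebra.
From mathcomp Require Import complex.
From mathcomp Require Import reals.
Set Implicit Arguments. Unset Strict Implicit. Unset Printing Implicit Defensive.
Import Order.TTheory GRing.Theory Num.Theory.
Local Open Scope ring_scope.

(* Bicomplex numbers: z1 + z2 i2 with z1, z2 in C(i1) = R[i]
   (the imaginary unit 'i of R[i] plays the role of i1). *)
Record bicomplex (R : realType) := BC { bc1 : R[i]; bc2 : R[i] }.

Section Bicomplex.
Variable R : realType.
Local Notation T := (bicomplex R).

Definition bc0 : T := BC 0 0.
Definition bcadd (x y : T) : T := BC (bc1 x + bc1 y) (bc2 x + bc2 y).
Definition bcopp (x : T) : T := BC (- bc1 x) (- bc2 x).
(* (z1 + z2 i2)(w1 + w2 i2) = (z1 w1 - z2 w2) + (z1 w2 + z2 w1) i2 *)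
Definition bcmul (x y : T) : T :=
  BC (bc1 x * bc1 y - bc2 x * bc2 y) (bc1 x * bc2 y + bc2 x * bc1 y).
Definition bcconj3 (x : T) : T := BC ((bc1 x)^*)%C (- (bc2 x)^*)%C.

(* idempotent components: x = (z1 - i1 z2) e1 + (z1 + i1 z2) e2 *)
Definition bcP1 (x : T) : R[i] := bc1 x - 'i * bc2 x.
Definition bcP2 (x : T) : R[i] := bc1 x + 'i * bc2 x.

(* D^+ = { a e1 + b e2 : a, b real, a, b >= 0 }; in R[i], 0 <= z means
   z is real and nonnegative. *)
Definition in_Dplus (x : T) : Prop := 0 <= bcP1 x /\ 0 <= bcP2 x.

Definition in_Ci1 (x : T) : Prop := bc2 x = 0.
End Bicomplex.

(* The free T-module M with T-basis {m_1,...,m_n} is represented by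
   coordinate vectors w.r.t. that basis: X = sum_l x_l m_l  <->  (x_l)_l. *)
Definition bcmod (R : realType) (n : nat) := 'I_n -> bicomplex R.

Section Module.
Variables (R : realType) (n : nat).
Local Notation M := (bcmod R n).

Definition madd (X Y : M) : M := fun l => bcadd (X l) (Y l).
Definition mopp (X : M) : M := fun l => bcopp (X l).
Definition msub (X Y : M) : M := madd X (mopp Y).
Definition mscale (a : bicomplex R) (X : M) : M := fun l => bcmul a (X l).
Definition mzero : M := fun _ => bc0 R.

Definition inV (X : M) : Prop := forall l, in_Ci1 (X l).

(* X_{e_k} = sum_l x_{kl} m_l, an element of V *)
Definition comp_e1 (X : M) : M := fun l => BC (bcP1 (X l)) 0.
Definition comp_e2 (X : M) : M := fun l => BC (bcP2 (X l)) 0.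

Definition bicomplex_scalar_product (sp : M -> M -> bicomplex R) : Prop :=
  [/\ (forall X Y1 Y2, sp X (madd Y1 Y2) = bcadd (sp X Y1) (sp X Y2)),
      (forall X Y a, sp X (mscale a Y) = bcmul a (sp X Y)),
      (forall X Y, sp X Y = bcconj3 (sp Y X)) &
      (forall X, sp X X = bc0 R <-> X = mzero)].

Definition hyperbolic_positive (sp : M -> M -> bicomplex R) : Prop :=
  forall X, in_Dplus (sp X X).

Definition closed_on_V (sp : M -> M -> bicomplex R) : Prop :=
  forall X Y, inV X -> inV Y -> in_Ci1 (sp X Y).

(* For Z in V, ||Z|| = (Z,Z)^(1/2); under the hypotheses (Z,Z) is a
   nonnegative real number, namely the real part of its C(i1)-part. *)
Definition normV (sp : M -> M -> bicomplex R) (Z : M) : R :=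
  Num.sqrt (complex.Re (bc1 (sp Z Z))).

Definition normM (sp : M -> M -> bicomplex R) (X : M) : R :=
  Num.sqrt ((normV sp (comp_e1 X) ^+ 2 + normV sp (comp_e2 X) ^+ 2) / 2).

Definition distM (sp : M -> M -> bicomplex R) (X Y : M) : R :=
  normM sp (msub X Y).

Definition metric_closed (d : M -> M -> R) (S : M -> Prop) : Prop :=
  forall X, ~ S X -> exists eps : R, 0 < eps /\ forall Y, d X Y < eps -> ~ S Y.
End Module.

(** For [X] outside [V], the vector [D := X_e1 - X_e2] lies in [V] and is
    nonzero, so [(D, D)] is a positive real.  Since [Y_e1 = Y_e2 = Y] for every
    [Y] in [V], the same [D] is the difference of the idempotent components of
    [X - Y], and the parallelogram law for the real part of the scalar product
    gives [(D, D) <= 2 ((W_e1, W_e1) + (W_e2, W_e2)) = 4 d(X, Y)^2] with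
    [W = X - Y].  Hence the ball of radius [sqrt (D, D) / 2] around [X] misses
    [V]. *)
From mathcomp Require Import all_boot all_order all_algebra.
From mathcomp Require Import complex reals.
From mathcomp Require Import ring lra.
From Stdlib Require Import FunctionalExtensionality.
Set Implicit Arguments. Unset Strict Implicit. Unset Printing Implicit Defensive.
Import Order.TTheory GRing.Theory Num.Theory.
Local Open Scope ring_scope.

Section RealPart.
Variable R : realType.

Definition bcRe (u : bicomplex R) : R := complex.Re (bc1 u).

Lemma bcRe_add (u v : bicomplex R) : bcRe (bcadd u v) = bcRe u + bcRe v.
Proof. by case: u v => [[a b] c] [[d e] f]. Qed.

Lemma bcRe_conj3 (u : bicomplex R) : bcRe (bcconj3 u) = bcRe u.
Proof. by case: u => [[a b] c]. Qed.

End RealPart.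

Section Components.
Variables (R : realType) (n : nat).
Implicit Types X Y : bcmod R n.

Lemma mopp_scaleN1 Y : mopp Y = mscale (BC (-1) 0) Y.
Proof.
apply: functional_extensionality => l.
by rewrite /mopp /mscale /bcopp /bcmul /=; congr BC; ring.
Qed.

Definition comp_diff X : bcmod R n := msub (comp_e1 X) (comp_e2 X).

Lemma comp_diff_inV X : inV (comp_diff X).
Proof. by move=> l; rewrite /in_Ci1 /= oppr0 addr0. Qed.

(* [X_e1 - X_e2] has coordinates [-2 i1 x_2l]. *)
Lemma comp_diff_eq0 X : comp_diff X = @mzero R n -> inV X.
Proof.
move=> /(congr1 (fun Z => bc1 (Z _))) /= diff0 l; rewrite /in_Ci1.
have /eqP : (-2 * 'i) * bc2 (X l) = 0.
  by rewrite -[RHS](diff0 l) /bcP1 /bcP2; ring.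
have /negPf i_eq0 : 'i != 0 :> R[i] := neq0Ci _.
by rewrite !mulf_eq0 oppr_eq0 pnatr_eq0 i_eq0 => /eqP.
Qed.

Lemma comp_diff_subV X Y : inV Y -> comp_diff (msub X Y) = comp_diff X.
Proof.
move=> YV; apply: functional_extensionality => l.
rewrite /comp_diff /msub /madd /mopp /comp_e1 /comp_e2 /bcadd /bcopp.
by rewrite /bcP1 /bcP2 /= (YV l); congr BC; ring.
Qed.

End Components.

Section ScalarProduct.
Variables (R : realType) (n : nat) (sp : bcmod R n -> bcmod R n -> bicomplex R).
Hypothesis sp_axioms : bicomplex_scalar_product sp.
Implicit Types X Y Z : bcmod R n.

Definition quad Z : R := bcRe (sp Z Z).

Lemma bcRe_spC X Y : bcRe (sp X Y) = bcRe (sp Y X).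
Proof. by case: sp_axioms => _ _ spC _; rewrite spC bcRe_conj3. Qed.

Lemma bcRe_spD X Y1 Y2 :
  bcRe (sp X (madd Y1 Y2)) = bcRe (sp X Y1) + bcRe (sp X Y2).
Proof. by case: sp_axioms => spD _ _ _; rewrite spD bcRe_add. Qed.

Lemma bcRe_spN X Y : bcRe (sp X (mopp Y)) = - bcRe (sp X Y).
Proof.
case: sp_axioms => _ spZ _ _; rewrite mopp_scaleN1 spZ.
by case: (sp X Y) => [[a b] c]; rewrite /bcRe /= !mulN1r !mul0r !subr0.
Qed.

Lemma bcRe_spDl X1 X2 Y :
  bcRe (sp (madd X1 X2) Y) = bcRe (sp X1 Y) + bcRe (sp X2 Y).
Proof. by rewrite bcRe_spC bcRe_spD !(bcRe_spC Y). Qed.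

Lemma bcRe_spNl X Y : bcRe (sp (mopp X) Y) = - bcRe (sp X Y).
Proof. by rewrite bcRe_spC bcRe_spN bcRe_spC. Qed.

Lemma quad_parallelogram X Y :
  quad (madd X Y) + quad (msub X Y) = 2 * quad X + 2 * quad Y.
Proof.
rewrite /quad /msub !bcRe_spDl !bcRe_spD !bcRe_spNl !bcRe_spN (bcRe_spC Y X).
lra.
Qed.

Hypothesis sp_pos : hyperbolic_positive sp.

(* [bc1 (Z, Z)] is the half sum of the two idempotent components of [(Z, Z)]. *)
Lemma sp_self_ge0 Z : 0 <= bc1 (sp Z Z).
Proof.
have [P1ge0 P2ge0] := sp_pos Z.
have : 0 <= bcP1 (sp Z Z) + bcP2 (sp Z Z) by rewrite addr_ge0.
have -> : bcP1 (sp Z Z) + bcP2 (sp Z Z) = 2 * bc1 (sp Z Z).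
  by rewrite /bcP1 /bcP2; ring.
by rewrite pmulr_rge0.
Qed.

Lemma quad_ge0 Z : 0 <= quad Z.
Proof.
by move: (sp_self_ge0 Z); rewrite /quad /bcRe; case: (bc1 _) => a b /andP[].
Qed.

Lemma quad_eq0 Z : quad Z = 0 -> bc1 (sp Z Z) = 0.
Proof.
move: (sp_self_ge0 Z); rewrite /quad /bcRe.
by case: (bc1 _) => a b /andP[/eqP /= -> _] /= ->.
Qed.

Lemma quad_subr_le X Y : quad (msub X Y) <= 2 * (quad X + quad Y).
Proof. by have := quad_parallelogram X Y; have := quad_ge0 (madd X Y); lra. Qed.

Lemma normM_sqr X : normM sp X ^+ 2 = (quad (comp_e1 X) + quad (comp_e2 X)) / 2.
Proof.
by rewrite /normM /normV !sqr_sqrtr ?divr_ge0 ?addr_ge0 ?sqrtr_ge0 ?quad_ge0.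
Qed.

Lemma sqrt_quad_comp_diff_le X Y :
  inV Y -> Num.sqrt (quad (comp_diff X)) <= 2 * distM sp X Y.
Proof.
move=> YV; rewrite -(comp_diff_subV X YV).
have dge0 : 0 <= 2 * distM sp X Y by rewrite mulr_ge0 ?sqrtr_ge0.
rewrite -(ger0_norm dge0) -sqrtr_sqr ler_wsqrtr // exprMn /distM normM_sqr.
by have := quad_subr_le (comp_e1 (msub X Y)) (comp_e2 (msub X Y)); lra.
Qed.

Hypothesis sp_closed : closed_on_V sp.

Lemma quad_eq0_inV Z : inV Z -> quad Z = 0 -> Z = @mzero R n.
Proof.
move=> ZV /quad_eq0 bc1_0; case: sp_axioms => _ _ _ spE; apply/spE.
by move: bc1_0 (sp_closed ZV ZV); rewrite /in_Ci1; case: (sp Z Z) => a b /= -> ->.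
Qed.

End ScalarProduct.

Theorem mainTheorem14 (R : realType) (n : nat)
    (sp : bcmod R n -> bcmod R n -> bicomplex R) :
  bicomplex_scalar_product sp ->
  hyperbolic_positive sp ->
  closed_on_V sp ->
  metric_closed (distM sp) (@inV R n).
Proof.
move=> sp_axioms sp_pos sp_closed X XnV.
have quad_gt0 : 0 < quad sp (comp_diff X).
  rewrite lt_def quad_ge0 // andbT; apply/eqP => /quad_eq0_inV quad0.
  exact/XnV/comp_diff_eq0/quad0/comp_diff_inV.
exists (Num.sqrt (quad sp (comp_diff X)) / 2); split.
  by rewrite divr_gt0 ?sqrtr_gt0.
move=> Y dlt YV; have := sqrt_quad_comp_diff_le sp_axioms sp_pos X YV.
by rewrite ltr_pdivlMr // mulrC in dlt; rewrite leNgt dlt.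
Qed.
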